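(* Let $\mathcal{S}$ be the stabilizer group of an $[[n,1,3]]$ stabilizer code on $n$ qubits. Let $g \in \mathcal{S}$ be a stabilizer generator of weight $w_g \ge 3$, written as $g = P_{a_1} P_{a_2} \cdots P_{a_{w_g}}$, where $a_1, \dots, a_{w_g}$ are the distinct qubits on which $g$ acts nontrivially, listed in the order in which the ancilla-controlled gates $\mathrm{C}\text{-}P_{a_1}, \dots, \mathrm{C}\text{-}P_{a_{w_g}}$ are applied during bare-ancilla syndrome extraction, and each $P_{a_i}\in\{X,Y,Z\}$ acts on qubit $a_i$. Consider a fault in a single ancilla–data gate $\mathrm{C}\text{-}P_{a_i}$ producing a two-qubit Pauli error on the ancilla and data qubit $a_i$; the resulting error on the data qubits is of the form $E_{i,Q} = Q_{a_i} \prod_{j > i} P_{a_j}$ with $Q \in \{X, Y, Z\}$ acting on qubit $a_i$. Let $$\mathcal{U}_g = \{E_{i,Q} : 1\le i\le w_g,\ Q\in\{X,Y,Z\},\ w(E_{i,Q}) > 1 \text{ and } w(E_{i,Q}\, s) > 1 \text{ for all } s \in \mathcal{S}\}.$$ Then $|\mathcal{U}_g| \le 3(w_g - 2)$.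
   Context: For a Pauli operator $E$ on $n$ qubits, $w(E)$ denotes its weight, i.e. the number of qubits on which $E$ acts nontrivially (global phases are ignored). Bare-ancilla syndrome extraction of $g$: a single ancilla is prepared in $|+\rangle$, the ancilla-controlled gates $\mathrm{C}\text{-}P_{a_1}, \dots, \mathrm{C}\text{-}P_{a_{w_g}}$ are applied in this order, and the ancilla is measured in the $X$ basis; an ancilla error occurring after gate $\mathrm{C}\text{-}P_{a_i}$ propagates to the data qubits as $\prod_{j>i}P_{a_j}$. Elements of $\mathcal{U}_g$ are called uncorrectable errors (errors not correctable by a distance-three code). *)

From mathcomp Require Import all_boot.
Set Implicit Arguments. Unset Strict Implicit. Unset Printing Implicit Defensive.

(* Single-qubit Paulis modulo phase, in binary symplectic form (x-bit, z-bit). *)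
Definition pauli := (bool * bool)%type.
Definition PI : pauli := (false, false).
Definition PX : pauli := (true, false).
Definition PZ : pauli := (false, true).
Definition PY : pauli := (true, true).

Definition pmul (p q : pauli) : pauli := (addb p.1 q.1, addb p.2 q.2).

Definition pauliop (n : nat) := {ffun 'I_n -> pauli}.

Definition opmul n (E F : pauliop n) : pauliop n := [ffun i => pmul (E i) (F i)].

Definition weight n (E : pauliop n) : nat := #|[set i | E i != PI]|.

Definition anticomm n (E F : pauliop n) : bool :=
  odd (\sum_(i < n) (((E i).1 && (F i).2) (+) ((E i).2 && (F i).1) : nat)).

Definition commute_op n (E F : pauliop n) : bool := ~~ anticomm E F.

Definition stabilizer_group n (S : {set pauliop n}) : Prop :=
  [/\ [ffun _ => PI] \in S,
      (forall E F, E \in S -> F \in S -> opmul E F \in S) &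
      (forall E F, E \in S -> F \in S -> commute_op E F)].

(* [[n,k,d]] stabilizer code: S has n-k independent generators (|S| = 2^(n-k)),
   and every logical operator (commutes with S, not in S) has weight >= d. *)
Definition stabilizer_code n k d (S : {set pauliop n}) : Prop :=
  [/\ stabilizer_group S, k <= n, #|S| = 2 ^ (n - k) &
      (forall E : pauliop n, (forall s, s \in S -> commute_op E s) ->
         E \notin S -> d <= weight E)].

Definition fault_error n (g : pauliop n) w (a : 'I_w -> 'I_n) (i : 'I_w) (Q : pauli)
  : pauliop n :=
  [ffun q => if q == a i then Q
             else if [exists j : 'I_w, (i < j) && (a j == q)] then g q else PI].

Definition uncorrectable n (S : {set pauliop n}) (g : pauliop n) w (a : 'I_w -> 'I_n)
  : {set pauliop n} :=
  [set E | [exists i : 'I_w, exists Q : pauli,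
              (Q != PI) && (E == fault_error g a i Q)]
           && (1 < weight E)
           && [forall s in S, 1 < weight (opmul E s)]].

From mathcomp Require Import all_boot.

Set Implicit Arguments.
Unset Strict Implicit.
Unset Printing Implicit Defensive.

(* A fault at the last gate leaves only [Q] on [a_w], an error of weight one.
   A fault at the first gate gives an error [E] such that [E g] acts only on
   [a_1], so it is correctable up to the stabilizer [g].  Hence only the
   [w - 2] inner gates, each with three nontrivial faults, can contribute to
   [U_g]. *)

Lemma weight_le1 n (E : pauliop n) (q0 : 'I_n) :
  (forall q, q != q0 -> E q = PI) -> weight E <= 1.
Proof.
move=> E0; rewrite /weight -(cards1 q0); apply: subset_leq_card.
by apply/subsetP => q; rewrite !inE; apply: contraR => /E0 ->.
Qed.

Definition inner_gates w : {set 'I_w} := [set i : 'I_w | 0 < i < w.-1].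

Lemma card_inner_gates w : #|inner_gates w| = w - 2.
Proof.
rewrite subn2 -subn1 -[RHS]muln1 -sum_nat_const_nat (big_nat_widen _ _ w) ?leq_pred //.
rewrite (big_nat_widenl _ 0) // big_mkord -sum1_card.
by apply: eq_bigl => i; rewrite inE andbC.
Qed.

Section FaultErrors.

Variables (n w : nat) (g : pauliop n) (a : 'I_w -> 'I_n).

Lemma weight_fault_error_last (i : 'I_w) (Q : pauli) :
  i = w.-1 :> nat -> weight (fault_error g a i Q) <= 1.
Proof.
move=> iw; apply: (weight_le1 (q0 := a i)) => q /negPf qai.
rewrite ffunE qai; case: existsP => // -[j /andP[+ _]].
by rewrite iw ltnNge -ltnS (leq_trans (ltn_ord j)) ?leqSpred.
Qed.

Hypothesis supp_g : forall q : 'I_n, (g q != PI) = [exists j : 'I_w, a j == q].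

Lemma weight_fault_error_first_mul (i : 'I_w) (Q : pauli) :
  i = 0 :> nat -> weight (opmul (fault_error g a i Q) g) <= 1.
Proof.
move=> i0; apply: (weight_le1 (q0 := a i)) => q /negPf qai.
rewrite !ffunE qai; case: ifP => [_ | /negbT no_later].
  by case: (g q) => [[] []].
suff -> : g q = PI by [].
apply/eqP/negPn; apply: contraNN no_later; rewrite supp_g => /existsP[j /eqP ajq].
apply/existsP; exists j; rewrite ajq eqxx andbT i0 lt0n.
apply: contraFN qai => /eqP j0.
by rewrite -ajq (_ : j = i) //; apply: val_inj; rewrite /= j0 i0.
Qed.

End FaultErrors.

Lemma uncorrectable_sub_inner n (S : {set pauliop n}) (g : pauliop n) w
    (a : 'I_w -> 'I_n) :
  g \in S -> (forall q : 'I_n, (g q != PI) = [exists j : 'I_w, a j == q]) ->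
  uncorrectable S g a \subset
    [set fault_error g a p.1 p.2 | p in setX (inner_gates w) [set~ PI]].
Proof.
move=> gS supp_g; apply/subsetP => E.
rewrite inE => /andP[/andP[/existsP[i /existsP[Q /andP[QI /eqP ->]]] heavy]].
move=> /forallP /(_ g) /implyP /(_ gS) heavy_g.
apply/imsetP; exists (i, Q) => //; rewrite !inE QI andbT /=.
have i_lt_w := ltn_ord i.
rewrite lt0n ltn_neqAle -ltnS (ltn_predK i_lt_w) i_lt_w andbT; apply/andP; split.
  by apply: contraTN heavy_g => /eqP i0; rewrite -leqNgt weight_fault_error_first_mul.
by apply: contraTN heavy => /eqP iw; rewrite -leqNgt weight_fault_error_last.
Qed.

Theorem lemma2 (n : nat) (S : {set pauliop n}) (g : pauliop n)
  (w : nat) (a : 'I_w -> 'I_n) :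
  stabilizer_code 1 3 S ->
  g \in S ->
  w = weight g ->
  3 <= w ->
  injective a ->
  (forall q : 'I_n, (g q != PI) = [exists j : 'I_w, a j == q]) ->
  #|uncorrectable S g a| <= 3 * (w - 2).
Proof.
move=> _ gS _ _ _ supp_g.
apply: leq_trans (subset_leq_card (uncorrectable_sub_inner gS supp_g)) _.
apply: leq_trans (leq_imset_card _ _) _.
by rewrite cardsX cardsC1 card_prod card_bool card_inner_gates mulnC.
Qed.
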